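(* With the notation below, every real-valued $f\in\mathcal K(C_p)$ admits a decomposition $f(\lambda)=\sum_i\Theta_{h_i,\mu_i}(\lambda)-\sum_j\Theta_{h'_j,\mu'_j}(\lambda)-h\lambda+c$ with finitely many $(h_i,\mu_i),(h'_j,\mu'_j)\in H_p^+\times\mathbb{R}_+^*$, $c\in\mathbb{R}$, $h\in H_p$, where $(p-1)h=\sum_ih_i-\sum_jh'_j$, $h_i\leq\mu_i<ph_i$ and $h'_j\leq\mu'_j<ph'_j$.
   Context: Let $p$ be a prime, $H_p=\mathbb{Z}[1/p]$, $H_p^+=H_p\cap(0,\infty)$. $\mathcal K(C_p)$ is the set of continuous piecewise affine functions $f:(0,\infty)\to\mathbb{R}$ (finitely many breakpoints on compact subintervals) with slopes in $H_p$ and $f(p\lambda)=f(\lambda)$, together with the constant $-\infty$. Let $\theta(\lambda)=\sum_{m\geq0}\max(0,1-p^m\lambda)+\sum_{m\geq1}\max(0,p^{-m}\lambda-1)$ for $\lambda>0$, and $\Theta_{h,\mu}(\lambda)=\mu\,\theta(\mu^{-1}h\lambda)$ for $h\in H_p^+$, $\mu>0$. *)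

From Stdlib Require Import Reals ZArith Znumtheory List.
From Coquelicot Require Import Coquelicot.
Open Scope R_scope.

Definition in_Hp (p : nat) (x : R) : Prop :=
  exists (k : Z) (n : nat), x = IZR k / (INR p) ^ n.

Definition piecewise_affine_Hp (p : nat) (f : R -> R) : Prop :=
  forall a b : R, 0 < a -> a <= b ->
    exists (n : nat) (x : nat -> R),
      x 0%nat = a /\ x n = b /\
      (forall i : nat, (i < n)%nat -> x i < x (S i)) /\
      (forall i : nat, (i < n)%nat ->
         exists s c : R, in_Hp p s /\
           forall y : R, x i <= y <= x (S i) -> f y = s * y + c).

(* Real-valued elements of K(C_p) (i.e. other than the constant -oo). *)
Definition K_Cp_real (p : nat) (f : R -> R) : Prop :=
  (forall x : R, 0 < x -> continuity_pt f x) /\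
  piecewise_affine_Hp p f /\
  (forall l : R, 0 < l -> f (INR p * l) = f l).

Definition theta (p : nat) (l : R) : R :=
  Series (fun m : nat => Rmax 0 (1 - (INR p) ^ m * l)) +
  Series (fun m : nat => Rmax 0 (l / (INR p) ^ (S m) - 1)).

Definition Theta (p : nat) (h mu l : R) : R := mu * theta p (/ mu * h * l).

Definition admissible_pair (p : nat) (hm : R * R) : Prop :=
  in_Hp p (fst hm) /\ 0 < fst hm /\ 0 < snd hm /\
  fst hm <= snd hm /\ snd hm < INR p * fst hm.

Definition sum_Theta (p : nat) (L : list (R * R)) (l : R) : R :=
  fold_right (fun hm acc => Theta p (fst hm) (snd hm) l + acc) 0 L.

Definition sum_h (L : list (R * R)) : R :=
  fold_right (fun hm acc => fst hm + acc) 0 L.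

(* On the fundamental domain [1, p] every admissible Theta_{h,mu} is the hinge
   max(0, mu - h l), and a hinge e * max(0, x - l) with 1 <= x < p is realised
   by the admissible pair (e, e x). Since d = (d^2 + 1) - (d^2 + 1 - d) with
   both terms positive, any slope change d in H_p at a breakpoint x is a
   difference of two admissible Thetas; adding one such pair per breakpoint,
   and one more at x = 1 (which vanishes on [1, p]) to adjust the sum of the
   h's, represents f on [1, p] as a signed sum of Thetas plus an affine
   function. Because theta(p u) = theta(u) + u - 1, the relation
   (p - 1) h = sum h_i - sum h'_j makes that representation p-invariant up to
   an additive constant, which vanishes as f(p) = f(1); a p-invariant function
   is determined by its values on [1, p]. *)
From Stdlib Require Import Reals ZArith Znumtheory List Lia Lra Psatz.
From Coquelicot Require Import Coquelicot.
Open Scope R_scope.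

Lemma ex_series_eventually_0 (a : nat -> R) (N : nat) :
  (forall n, (N <= n)%nat -> a n = 0) -> ex_series a.
Proof.
  intros Ha. apply (proj2 (ex_series_incr_n a N)).
  apply ex_series_ext with (a := fun n => (/ 2) ^ n * 0).
  - intros n. rewrite Ha by lia. apply Rmult_0_r.
  - apply ex_series_scal_r, ex_series_geom. rewrite Rabs_pos_eq; lra.
Qed.

Lemma Series_0 (a : nat -> R) : (forall n, a n = 0) -> Series a = 0.
Proof.
  intros Ha. rewrite (Series_ext a (fun _ => 0 * 1)) by (intros; rewrite Ha; ring).
  rewrite Series_scal_l. ring.
Qed.

Lemma ex_series_theta_low (P l : R) : 1 < P -> 0 < l ->
  ex_series (fun m => Rmax 0 (1 - P ^ m * l)).
Proof.
  intros HP Hl. destruct (Pow_x_infinity P) with (b := / l) as [N HN].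
  { rewrite Rabs_pos_eq; lra. }
  apply (ex_series_eventually_0 _ N). intros n Hn. apply Rmax_left.
  specialize (HN n Hn). rewrite Rabs_pos_eq in HN by (apply pow_le; lra).
  assert (/ l * l = 1) by (field; lra). nra.
Qed.

Lemma ex_series_theta_high (P l : R) : 1 < P -> 0 < l ->
  ex_series (fun m => Rmax 0 (l / P ^ m - 1)).
Proof.
  intros HP Hl. destruct (Pow_x_infinity P) with (b := l) as [N HN].
  { rewrite Rabs_pos_eq; lra. }
  apply (ex_series_eventually_0 _ N). intros n Hn. apply Rmax_left.
  specialize (HN n Hn). rewrite Rabs_pos_eq in HN by (apply pow_le; lra).
  assert (0 < P ^ n) by (apply pow_lt; lra).
  enough (l / P ^ n <= 1) by lra.
  apply (Rmult_le_reg_r (P ^ n)); auto. field_simplify; lra.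
Qed.

(* Multiplying the argument by p shifts both series by one index; the two
   boundary terms contribute max(0, l - 1) - max(0, 1 - l) = l - 1. *)
Lemma theta_mult_p (p : nat) (l : R) : 1 < INR p -> 0 < l ->
  theta p (INR p * l) = theta p l + l - 1.
Proof.
  intros HP Hl. unfold theta. set (P := INR p) in *.
  rewrite (Series_ext (fun m => Rmax 0 (1 - P ^ m * (P * l)))
             (fun k => Rmax 0 (1 - P ^ (S k) * l)))
    by (intros; simpl; f_equal; ring).
  rewrite (Series_ext (fun m => Rmax 0 (P * l / P ^ S m - 1))
             (fun m => Rmax 0 (l / P ^ m - 1))).
  2:{ intros; simpl; f_equal. field. split; [apply pow_nonzero|]; lra. }
  rewrite (Series_incr_1 (fun m => Rmax 0 (1 - P ^ m * l)))
    by (apply ex_series_theta_low; lra).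
  rewrite (Series_incr_1 (fun m => Rmax 0 (l / P ^ m - 1)))
    by (apply ex_series_theta_high; lra).
  simpl. replace (l / 1) with l by field. replace (1 * l) with l by ring.
  unfold Rmax; destruct Rle_dec, Rle_dec; lra.
Qed.

Lemma theta_near_1 (p : nat) (u : R) : 1 < INR p -> 1 < INR p * u -> u <= INR p ->
  theta p u = Rmax 0 (1 - u).
Proof.
  intros HP H1 H2. unfold theta. set (P := INR p) in *.
  assert (Hlow : forall m, Rmax 0 (1 - P ^ S m * u) = 0).
  { intros m. apply Rmax_left. simpl.
    assert (1 <= P ^ m) by (apply pow_R1_Rle; lra). nra. }
  assert (Hhigh : forall m, Rmax 0 (u / P ^ S m - 1) = 0).
  { intros m. apply Rmax_left. simpl.
    assert (1 <= P ^ m) by (apply pow_R1_Rle; lra).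
    assert (0 < P * P ^ m) by nra.
    enough (u / (P * P ^ m) <= 1) by lra.
    apply (Rmult_le_reg_r (P * P ^ m)); auto. field_simplify; nra. }
  rewrite Series_incr_1.
  2:{ apply ex_series_incr_1, (ex_series_eventually_0 _ 0). intros; apply Hlow. }
  rewrite (Series_0 _ Hlow), (Series_0 _ Hhigh).
  simpl. replace (1 * u) with u by ring. ring.
Qed.

Lemma IZR_pow_of_nat (p n : nat) : IZR (Z.of_nat p ^ Z.of_nat n) = INR p ^ n.
Proof. rewrite <- pow_IZR, <- INR_IZR_INZ. reflexivity. Qed.

Lemma in_Hp_plus (p : nat) (x y : R) : 0 < INR p ->
  in_Hp p x -> in_Hp p y -> in_Hp p (x + y).
Proof.
  intros HP [k1 [n1 ->]] [k2 [n2 ->]].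
  exists (k1 * Z.of_nat p ^ Z.of_nat n2 + k2 * Z.of_nat p ^ Z.of_nat n1)%Z, (n1 + n2)%nat.
  rewrite plus_IZR, !mult_IZR, !IZR_pow_of_nat, pow_add.
  field. split; apply pow_nonzero; lra.
Qed.

Lemma in_Hp_mult (p : nat) (x y : R) : 0 < INR p ->
  in_Hp p x -> in_Hp p y -> in_Hp p (x * y).
Proof.
  intros HP [k1 [n1 ->]] [k2 [n2 ->]]. exists (k1 * k2)%Z, (n1 + n2)%nat.
  rewrite mult_IZR, pow_add. field. split; apply pow_nonzero; lra.
Qed.

Lemma in_Hp_opp (p : nat) (x : R) : in_Hp p x -> in_Hp p (- x).
Proof.
  intros [k [n ->]]. exists (- k)%Z, n. rewrite opp_IZR. unfold Rdiv. ring.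
Qed.

Lemma in_Hp_minus (p : nat) (x y : R) : 0 < INR p ->
  in_Hp p x -> in_Hp p y -> in_Hp p (x - y).
Proof. intros. apply in_Hp_plus, in_Hp_opp; auto. Qed.

Lemma in_Hp_1 (p : nat) : in_Hp p 1.
Proof. exists 1%Z, 0%nat. simpl. field. Qed.

Lemma in_Hp_INR (p : nat) : in_Hp p (INR p).
Proof. exists (Z.of_nat p), 0%nat. rewrite <- INR_IZR_INZ. simpl. field. Qed.

Lemma sum_h_in_Hp (p : nat) (L : list (R * R)) : 0 < INR p ->
  List.Forall (admissible_pair p) L -> in_Hp p (sum_h L).
Proof.
  intros HP HL. induction HL as [|hm L [Hh _] _ IH]; simpl.
  - exists 0%Z, 0%nat. simpl. field.
  - apply in_Hp_plus; auto.
Qed.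

Lemma Theta_hinge (p : nat) (h mu l : R) : 1 < INR p -> admissible_pair p (h, mu) ->
  1 <= l <= INR p -> Theta p h mu l = Rmax 0 (mu - h * l).
Proof.
  intros HP [_ [Hh [Hmu [Hhmu HmuP]]]] Hl; simpl in *. unfold Theta.
  rewrite theta_near_1; auto.
  - rewrite <- (RmaxRmult _ _ mu) by lra. f_equal; field; lra.
  - apply (Rmult_lt_reg_r mu); auto. field_simplify; [nra | lra].
  - apply (Rmult_le_reg_r mu); auto. field_simplify; [nra | lra].
Qed.

Lemma Theta_mult_p (p : nat) (h mu l : R) : 1 < INR p -> 0 < h -> 0 < mu -> 0 < l ->
  Theta p h mu (INR p * l) = Theta p h mu l + h * l - mu.
Proof.
  intros HP Hh Hmu Hl. unfold Theta.
  replace (/ mu * h * (INR p * l)) with (INR p * (/ mu * h * l)) by ring.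
  rewrite theta_mult_p; auto.
  - field. lra.
  - apply Rmult_lt_0_compat; [apply Rmult_lt_0_compat|]; auto. apply Rinv_0_lt_compat; lra.
Qed.

Definition sum_mu (L : list (R * R)) : R := fold_right (fun hm acc => snd hm + acc) 0 L.

Lemma sum_Theta_mult_p (p : nat) (L : list (R * R)) (l : R) : 1 < INR p -> 0 < l ->
  List.Forall (admissible_pair p) L ->
  sum_Theta p L (INR p * l) = sum_Theta p L l + sum_h L * l - sum_mu L.
Proof.
  intros HP Hl HL. induction HL as [|[h mu] L [_ [Hh [Hmu _]]] _ IH]; simpl in *.
  - ring.
  - rewrite Theta_mult_p, IH by auto. ring.
Qed.

Lemma admissible_pair_scale (p : nat) (e x : R) : in_Hp p e -> 0 < e ->
  1 <= x < INR p -> admissible_pair p (e, e * x).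
Proof. intros He He0 Hx. repeat split; simpl; auto; nra. Qed.

Lemma Theta_signed_hinge (p : nat) (d x : R) : 1 < INR p -> in_Hp p d -> 1 <= x < INR p ->
  exists a b, admissible_pair p (a, a * x) /\ admissible_pair p (b, b * x) /\ a - b = d /\
    forall l, 1 <= l <= INR p ->
      Theta p a (a * x) l - Theta p b (b * x) l = d * Rmax 0 (x - l).
Proof.
  intros HP Hd Hx.
  assert (HP0 : 0 < INR p) by lra.
  assert (Ha : in_Hp p (d * d + 1)) by (apply in_Hp_plus, in_Hp_1; try apply in_Hp_mult; auto).
  assert (Hb : in_Hp p (d * d + 1 - d)) by (apply in_Hp_minus; auto).
  assert (Hadm : forall e, in_Hp p e -> 0 < e -> admissible_pair p (e, e * x))
    by (intros; apply admissible_pair_scale; auto).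
  exists (d * d + 1), (d * d + 1 - d).
  split; [apply Hadm; auto; nra|]. split; [apply Hadm; auto; nra|]. split; [ring|].
  intros l Hl. rewrite !Theta_hinge by (auto; apply Hadm; auto; nra).
  assert (Hscale : forall e, 0 < e -> Rmax 0 (e * x - e * l) = e * Rmax 0 (x - l)).
  { intros e He. rewrite Rmult_max_distr_l by lra. f_equal; ring. }
  rewrite !Hscale by nra. ring.
Qed.

Lemma increasing_seq_lt (x : nat -> R) (n : nat) :
  (forall i, (i < n)%nat -> x i < x (S i)) ->
  forall i j, (i < j <= n)%nat -> x i < x j.
Proof.
  intros Hinc i j Hij. induction j as [|j IH]; [lia|].
  destruct (Nat.eq_dec i j) as [->|Hne]; [apply Hinc; lia|].
  apply Rlt_trans with (x j); [apply IH; lia | apply Hinc; lia].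
Qed.

Lemma increasing_seq_le (x : nat -> R) (n : nat) :
  (forall i, (i < n)%nat -> x i < x (S i)) ->
  forall i j, (i <= j <= n)%nat -> x i <= x j.
Proof.
  intros Hinc i j Hij. destruct (Nat.eq_dec i j) as [->|Hne]; [lra|].
  apply Rlt_le, (increasing_seq_lt x n Hinc). lia.
Qed.

Section FundamentalDomain.

Variables (p : nat) (f : R -> R).
Hypothesis HP : 1 < INR p.

Definition Theta_diff (L1 L2 : list (R * R)) (l : R) : R :=
  sum_Theta p L1 l - sum_Theta p L2 l.

Lemma Theta_diff_cons (L1 L2 : list (R * R)) (a b : R * R) (l : R) :
  Theta_diff (a :: L1) (b :: L2) l =
  Theta p (fst a) (snd a) l - Theta p (fst b) (snd b) l + Theta_diff L1 L2 l.
Proof. unfold Theta_diff. simpl. ring. Qed.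

Lemma Theta_diff_extend (L1 L2 : list (R * R)) (s C s' c' y z : R) :
  List.Forall (admissible_pair p) L1 -> List.Forall (admissible_pair p) L2 ->
  in_Hp p s -> in_Hp p s' -> 1 <= y < INR p -> y <= z <= INR p ->
  (forall l, 1 <= l <= y -> f l = Theta_diff L1 L2 l + s * l + C) ->
  (forall l, y <= l <= INR p -> Theta_diff L1 L2 l = 0) ->
  (forall l, y <= l <= z -> f l = s' * l + c') ->
  exists L1' L2' C',
    List.Forall (admissible_pair p) L1' /\ List.Forall (admissible_pair p) L2' /\
    (forall l, 1 <= l <= z -> f l = Theta_diff L1' L2' l + s' * l + C') /\
    (forall l, y <= l <= INR p -> Theta_diff L1' L2' l = 0).
Proof.
  intros HL1 HL2 Hs Hs' Hy Hyz Hrep Hzero Hpiece.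
  assert (Hd : in_Hp p (s' - s)) by (apply in_Hp_minus; auto; lra).
  destruct (Theta_signed_hinge p (s' - s) y HP Hd Hy) as [a [b [Ha [Hb [_ Hhinge]]]]].
  assert (Hfy : s * y + C = s' * y + c').
  { rewrite <- Hpiece, Hrep, Hzero by lra. ring. }
  exists ((a, a * y) :: L1), ((b, b * y) :: L2), (C - (s' - s) * y).
  split; [constructor; auto|]. split; [constructor; auto|]. split.
  - intros l Hl. rewrite Theta_diff_cons. simpl. rewrite Hhinge by lra.
    destruct (Rle_dec l y) as [Hly|Hly].
    + rewrite Rmax_right, Hrep by lra. ring.
    + rewrite Rmax_left, Hzero, Hpiece by lra. nra.
  - intros l Hl. rewrite Theta_diff_cons. simpl.
    rewrite Hhinge, Rmax_left, Hzero by lra. ring.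
Qed.

Lemma Theta_diff_breakpoints (n : nat) (x : nat -> R) :
  x 0%nat = 1 -> x n = INR p ->
  (forall i, (i < n)%nat -> x i < x (S i)) ->
  (forall i, (i < n)%nat -> exists s c, in_Hp p s /\
     forall l, x i <= l <= x (S i) -> f l = s * l + c) ->
  forall k, (k < n)%nat ->
  exists L1 L2 s C,
    List.Forall (admissible_pair p) L1 /\ List.Forall (admissible_pair p) L2 /\
    in_Hp p s /\
    (forall l, 1 <= l <= x (S k) -> f l = Theta_diff L1 L2 l + s * l + C) /\
    (forall l, x k <= l <= INR p -> Theta_diff L1 L2 l = 0).
Proof.
  intros Hx0 Hxn Hinc Hpieces k. induction k as [|k IH]; intros Hk.
  - destruct (Hpieces 0%nat Hk) as [s [c [Hs Hf]]].
    exists nil, nil, s, c. unfold Theta_diff. simpl.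
    repeat split; auto; intros l Hl; [rewrite Hf by lra|]; ring.
  - destruct (IH ltac:(lia)) as [L1 [L2 [s [C [HL1 [HL2 [Hs [Hrep Hzero]]]]]]]].
    destruct (Hpieces (S k) Hk) as [s' [c' [Hs' Hpiece]]].
    assert (Hlt := increasing_seq_lt x n Hinc).
    assert (Hle := increasing_seq_le x n Hinc).
    assert (1 < x (S k)) by (rewrite <- Hx0; apply Hlt; lia).
    assert (x (S k) < INR p) by (rewrite <- Hxn; apply Hlt; lia).
    assert (x k <= x (S k)) by (apply Hle; lia).
    assert (x (S k) <= x (S (S k)) <= INR p) by (rewrite <- Hxn; split; apply Hle; lia).
    destruct (Theta_diff_extend L1 L2 s C s' c' (x (S k)) (x (S (S k))))
      as [L1' [L2' [C' [HL1' [HL2' [Hrep' Hzero']]]]]]; auto.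
    + lra.
    + intros l Hl. apply Hzero. lra.
    + exists L1', L2', s', C'. auto.
Qed.

Lemma piecewise_affine_Theta_diff :
  piecewise_affine_Hp p f ->
  exists L1 L2 s C,
    List.Forall (admissible_pair p) L1 /\ List.Forall (admissible_pair p) L2 /\
    in_Hp p s /\
    forall l, 1 <= l <= INR p -> f l = Theta_diff L1 L2 l + s * l + C.
Proof.
  intros Hpw. destruct (Hpw 1 (INR p)) as [n [x [Hx0 [Hxn [Hinc Hpieces]]]]]; try lra.
  destruct n as [|k]; [rewrite Hx0 in Hxn; lra|].
  destruct (Theta_diff_breakpoints (S k) x Hx0 Hxn Hinc Hpieces k)
    as [L1 [L2 [s [C [HL1 [HL2 [Hs [Hrep _]]]]]]]]; [lia|].
  exists L1, L2, s, C. rewrite Hxn in Hrep. auto.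
Qed.

Lemma piecewise_affine_Theta_diff_balanced :
  piecewise_affine_Hp p f ->
  exists L1 L2 h C,
    List.Forall (admissible_pair p) L1 /\ List.Forall (admissible_pair p) L2 /\
    in_Hp p h /\ (INR p - 1) * h = sum_h L1 - sum_h L2 /\
    forall l, 1 <= l <= INR p -> f l = Theta_diff L1 L2 l - h * l + C.
Proof.
  intros Hpw.
  destruct piecewise_affine_Theta_diff as [L1 [L2 [s [C [HL1 [HL2 [Hs Hrep]]]]]]]; auto.
  assert (HP0 : 0 < INR p) by lra.
  assert (Hd : in_Hp p ((1 - INR p) * s - (sum_h L1 - sum_h L2))).
  { apply in_Hp_minus; [| apply in_Hp_mult | apply in_Hp_minus]; auto;
      try apply sum_h_in_Hp; auto. apply in_Hp_minus; auto using in_Hp_1, in_Hp_INR. }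
  destruct (Theta_signed_hinge p _ 1 HP Hd) as [a [b [Ha [Hb [Hab Hhinge]]]]]; [lra|].
  exists ((a, a * 1) :: L1), ((b, b * 1) :: L2), (- s), C.
  split; [constructor; auto|]. split; [constructor; auto|].
  split; [apply in_Hp_opp; auto|]. split.
  - simpl. lra.
  - intros l Hl. rewrite Theta_diff_cons, Hrep by auto. simpl.
    rewrite Hhinge, Rmax_left by lra. ring.
Qed.

Lemma Theta_diff_mult_p (L1 L2 : list (R * R)) (h C l : R) :
  List.Forall (admissible_pair p) L1 -> List.Forall (admissible_pair p) L2 ->
  (INR p - 1) * h = sum_h L1 - sum_h L2 -> 0 < l ->
  Theta_diff L1 L2 (INR p * l) - h * (INR p * l) + C =
  Theta_diff L1 L2 l - h * l + C + (sum_mu L2 - sum_mu L1).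
Proof.
  intros HL1 HL2 Hh Hl. unfold Theta_diff. rewrite !sum_Theta_mult_p by auto.
  enough ((sum_h L1 - sum_h L2) * l = (INR p - 1) * h * l) by lra.
  rewrite Hh. ring.
Qed.

End FundamentalDomain.

Section MultInvariant.

Variables (P : R) (g : R -> R).
Hypothesis HP : 1 < P.
Hypothesis Hg_inv : forall l, 0 < l -> g (P * l) = g l.
Hypothesis Hg_dom : forall l, 1 <= l <= P -> g l = 0.

Lemma mult_invariant_pow (m : nat) (l : R) : 0 < l -> g (P ^ m * l) = g l.
Proof.
  intros Hl. induction m as [|m IH]; simpl.
  - f_equal. ring.
  - rewrite Rmult_assoc, Hg_inv; auto.
    apply Rmult_lt_0_compat; auto. apply pow_lt. lra.
Qed.

Lemma mult_invariant_zero_ge_1 (l : R) : 1 <= l -> g l = 0.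
Proof.
  intros Hl. destruct (Pow_x_infinity P) with (b := l) as [N HN].
  { rewrite Rabs_pos_eq; lra. }
  specialize (HN N (Nat.le_refl N)). rewrite Rabs_pos_eq in HN by (apply pow_le; lra).
  revert l Hl HN. induction N as [|N IH]; intros l Hl HlN; simpl in HlN.
  - apply Hg_dom. lra.
  - destruct (Rle_dec l P) as [HlP|HlP]; [apply Hg_dom; lra|].
    replace l with (P * (l / P)) by (field; lra).
    rewrite Hg_inv by (apply Rdiv_lt_0_compat; lra).
    apply IH.
    + apply (Rmult_le_reg_l P); [lra|]. field_simplify; lra.
    + apply Rle_ge, (Rmult_le_reg_l P); [lra|]. field_simplify; lra.
Qed.

Lemma mult_invariant_zero (l : R) : 0 < l -> g l = 0.
Proof.
  intros Hl. destruct (Pow_x_infinity P) with (b := / l) as [N HN].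
  { rewrite Rabs_pos_eq; lra. }
  specialize (HN N (Nat.le_refl N)). rewrite Rabs_pos_eq in HN by (apply pow_le; lra).
  rewrite <- (mult_invariant_pow N) by auto.
  apply mult_invariant_zero_ge_1.
  assert (/ l * l = 1) by (field; lra). nra.
Qed.

End MultInvariant.

Lemma prime_INR_gt_1 (p : nat) : prime (Z.of_nat p) -> 1 < INR p.
Proof.
  intros Hp. apply prime_ge_2 in Hp. rewrite INR_IZR_INZ.
  apply IZR_le in Hp. lra.
Qed.

Theorem theorem5p12 (p : nat) (Hp : prime (Z.of_nat p)) (f : R -> R)
  (Hf : K_Cp_real p f) :
  exists (L1 L2 : list (R * R)) (h c : R),
    List.Forall (admissible_pair p) L1 /\
    List.Forall (admissible_pair p) L2 /\
    in_Hp p h /\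
    (INR p - 1) * h = sum_h L1 - sum_h L2 /\
    forall l : R, 0 < l ->
      f l = sum_Theta p L1 l - sum_Theta p L2 l - h * l + c.
Proof.
  destruct Hf as [_ [Hpw Hf_inv]].
  assert (HP : 1 < INR p) by (apply prime_INR_gt_1; auto).
  destruct (piecewise_affine_Theta_diff_balanced p f HP Hpw)
    as [L1 [L2 [h [C [HL1 [HL2 [Hh [Hsum Hrep]]]]]]]].
  exists L1, L2, h, C. do 4 (split; auto).
  set (g := fun l => Theta_diff p L1 L2 l - h * l + C).
  assert (Hg_mult : forall l, 0 < l -> g (INR p * l) = g l + (sum_mu L2 - sum_mu L1))
    by (intros; apply Theta_diff_mult_p; auto).
  assert (Hmu : sum_mu L2 - sum_mu L1 = 0).
  { specialize (Hg_mult 1 Rlt_0_1). specialize (Hf_inv 1 Rlt_0_1).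
    rewrite Rmult_1_r in *. unfold g in Hg_mult. rewrite <- !Hrep in Hg_mult by lra. lra. }
  intros l Hl.
  enough (f l - g l = 0) by (unfold g, Theta_diff in *; lra).
  apply (mult_invariant_zero (INR p) (fun l => f l - g l)); auto.
  - intros l' Hl'. rewrite Hf_inv, Hg_mult by auto. lra.
  - intros l' Hl'. unfold g. rewrite Hrep by auto. ring.
Qed.
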